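(* Let $\mathcal{C}$ be an amendable category (having the pullbacks and pushouts required for PBPO rules and steps). Then for any canonical PBPO rule $\rho$ there exists a monic PBPO rule $\sigma$ such that ${\Rightarrow^{\rightarrowtail}_\rho} = {\Rightarrow_\sigma}$. If $\mathcal{C}$ is moreover strongly amendable, then additionally ${\Rightarrow^{\rightarrowtail}_\rho} = {\Rightarrow^{\mathrm{SM}}_\sigma}$.
   Context: A PBPO rule consists of objects $L,K,R,L',K',R'$ and morphisms $l : K \to L$, $r : K \to R$, $t_L : L \to L'$, $t_K : K \to K'$, $t_R : R \to R'$, $l' : K' \to L'$, $r' : K' \to R'$ with $t_L \circ l = l' \circ t_K$ and $t_R \circ r = r' \circ t_K$. It is canonical if $L \xleftarrow{l} K \xrightarrow{t_K} K'$ is a pullback of $t_L, l'$ and $K' \xrightarrow{r'} R' \xleftarrow{t_R} R$ is a pushout of $t_K, r$; it is monic if it is canonical and $t_L$ is a monomorphism. A PBPO rewrite step $G_L \Rightarrow_\rho^{m,\alpha} G_R$ is given by $m : L \to G_L$, $\alpha : G_L \to L'$ with $t_L = \alpha \circ m$; a pullback $G_L \xleftarrow{g_L} G_K \xrightarrow{u'} K'$ of $\alpha$ and $l'$; the unique $u : K \to G_K$ with $g_L \circ u = m \circ l$, $u' \circ u = t_K$; and a pushout $G_K \xrightarrow{g_R} G_R \xleftarrow{w} R$ of $u$ and $r$ (with the induced $w' : G_R \to R'$). ${\Rightarrow_\rho}$ is the relation $\{(G_L,G_R) \mid \exists m,\alpha.\ G_L \Rightarrow^{m,\alpha}_\rho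 G_R\}$; ${\Rightarrow^{\rightarrowtail}_\rho}$ is its restriction to steps with $m$ monic; ${\Rightarrow^{\mathrm{SM}}_\rho}$ is its restriction to steps where $L \xleftarrow{1_L} L \xrightarrow{m} G_L$ is a pullback of $t_L$ and $\alpha$ (strong match). A category is amendable if for every morphism $t_L : L \to L'$ there is a factorization $t_L = \beta \circ t_L'$ with $t_L' : L \rightarrowtail L''$ mono and $\beta : L'' \to L'$ such that for every factorization $t_L = \alpha \circ m$ with $m : L \rightarrowtail G_L$ mono and $\alpha : G_L \to L'$ there exists $\alpha' : G_L \to L''$ with $\alpha' \circ m = t_L'$ and $\beta \circ \alpha' = \alpha$. It is strongly amendable if moreover the factorization $(t_L',\beta)$ can be chosen so that in each case $L \xleftarrow{1_L} L \xrightarrow{m} G_L$ is a pullback of $t_L'$ and $\alpha'$. *)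

Set Implicit Arguments.
Set Universe Polymorphism.

Record Category := {
  Ob :> Type;
  Hom : Ob -> Ob -> Type;
  idm : forall A : Ob, Hom A A;
  comp : forall {A B C : Ob}, Hom B C -> Hom A B -> Hom A C;
  comp_assoc : forall (A B C D : Ob) (h : Hom C D) (g : Hom B C) (f : Hom A B),
      comp h (comp g f) = comp (comp h g) f;
  comp_id_l : forall (A B : Ob) (f : Hom A B), comp (idm B) f = f;
  comp_id_r : forall (A B : Ob) (f : Hom A B), comp f (idm A) = f
}.

Arguments Hom {c} _ _.
Arguments idm {c} _.
Arguments comp {c A B C} _ _.

Section Cat.
Variable C : Category.

Definition mono {A B : C} (f : Hom A B) : Prop :=
  forall (X : C) (a b : Hom X A), comp f a = comp f b -> a = b.

Definition is_pullback {A B Z P : C} (f : Hom A Z) (g : Hom B Z)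
    (p1 : Hom P A) (p2 : Hom P B) : Prop :=
  comp f p1 = comp g p2 /\
  forall (Q : C) (q1 : Hom Q A) (q2 : Hom Q B), comp f q1 = comp g q2 ->
    exists u : Hom Q P, (comp p1 u = q1 /\ comp p2 u = q2) /\
      forall v : Hom Q P, comp p1 v = q1 -> comp p2 v = q2 -> v = u.

Definition is_pushout {A B Z P : C} (f : Hom A B) (g : Hom A Z)
    (i1 : Hom B P) (i2 : Hom Z P) : Prop :=
  comp i1 f = comp i2 g /\
  forall (Q : C) (q1 : Hom B Q) (q2 : Hom Z Q), comp q1 f = comp q2 g ->
    exists u : Hom P Q, (comp u i1 = q1 /\ comp u i2 = q2) /\
      forall v : Hom P Q, comp v i1 = q1 -> comp v i2 = q2 -> v = u.

Definition has_pullbacks : Prop :=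
  forall (A B Z : C) (f : Hom A Z) (g : Hom B Z),
    exists (P : C) (p1 : Hom P A) (p2 : Hom P B), is_pullback f g p1 p2.

Definition has_pushouts : Prop :=
  forall (A B Z : C) (f : Hom A B) (g : Hom A Z),
    exists (P : C) (i1 : Hom B P) (i2 : Hom Z P), is_pushout f g i1 i2.

Record PBPO_rule := {
  rL : C; rK : C; rR : C; rL' : C; rK' : C; rR' : C;
  r_l : Hom rK rL;
  r_r : Hom rK rR;
  r_tL : Hom rL rL';
  r_tK : Hom rK rK';
  r_tR : Hom rR rR';
  r_l' : Hom rK' rL';
  r_r' : Hom rK' rR';
  r_comm_l : comp r_tL r_l = comp r_l' r_tK;
  r_comm_r : comp r_tR r_r = comp r_r' r_tK
}.

Definition canonical_rule (rho : PBPO_rule) : Prop :=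
  is_pullback (r_tL rho) (r_l' rho) (r_l rho) (r_tK rho) /\
  is_pushout (r_tK rho) (r_r rho) (r_r' rho) (r_tR rho).

Definition monic_rule (rho : PBPO_rule) : Prop :=
  canonical_rule rho /\ mono (r_tL rho).

Definition pbpo_step (rho : PBPO_rule) (GL GR : C)
    (m : Hom (rL rho) GL) (alpha : Hom GL (rL' rho)) : Prop :=
  r_tL rho = comp alpha m /\
  exists (GK : C) (gL : Hom GK GL) (u' : Hom GK (rK' rho)),
    is_pullback alpha (r_l' rho) gL u' /\
    exists u : Hom (rK rho) GK,
      comp gL u = comp m (r_l rho) /\ comp u' u = r_tK rho /\
      exists (gR : Hom GK GR) (w : Hom (rR rho) GR),
        is_pushout u (r_r rho) gR w.

Definition rewrites (rho : PBPO_rule) (GL GR : C) : Prop :=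
  exists m alpha, pbpo_step rho GL GR m alpha.

Definition rewrites_mono (rho : PBPO_rule) (GL GR : C) : Prop :=
  exists m alpha, mono m /\ pbpo_step rho GL GR m alpha.

Definition strong_match (rho : PBPO_rule) {GL : C}
    (m : Hom (rL rho) GL) (alpha : Hom GL (rL' rho)) : Prop :=
  is_pullback (r_tL rho) alpha (idm (rL rho)) m.

Definition rewrites_SM (rho : PBPO_rule) (GL GR : C) : Prop :=
  exists m alpha, strong_match rho m alpha /\ pbpo_step rho GL GR m alpha.

Definition amendable : Prop :=
  forall (L L' : C) (tL : Hom L L'),
    exists (L'' : C) (tL' : Hom L L'') (beta : Hom L'' L'),
      mono tL' /\ tL = comp beta tL' /\
      forall (GL : C) (m : Hom L GL) (alpha : Hom GL L'),
        mono m -> tL = comp alpha m ->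
        exists alpha' : Hom GL L'', comp alpha' m = tL' /\ comp beta alpha' = alpha.

Definition strongly_amendable : Prop :=
  forall (L L' : C) (tL : Hom L L'),
    exists (L'' : C) (tL' : Hom L L'') (beta : Hom L'' L'),
      mono tL' /\ tL = comp beta tL' /\
      forall (GL : C) (m : Hom L GL) (alpha : Hom GL L'),
        mono m -> tL = comp alpha m ->
        exists alpha' : Hom GL L'', comp alpha' m = tL' /\ comp beta alpha' = alpha /\
          is_pullback tL' alpha' (idm L) m.

End Cat.

(* Amendability factors t_L : L -> L' as beta o t_L' with t_L' monic and universal among
   monic matches. Pulling l' back along beta gives K'' -> L'' and, via the pushout of the
   induced t_K'' : K -> K'' with r, a monic rule sigma over L''. By pullback pasting, the
   pullback of alpha' : G_L -> L'' along l'' is the pullback of beta o alpha' along l', and the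
   pushout part of a step is the same for rho and sigma. So every monic-match rho-step with
   type alpha is the sigma-step with type its amendment alpha', and every sigma-step with type
   alpha' is the rho-step with type beta o alpha', whose match is monic because
   alpha' o m = t_L' is. Strong amendability makes every such alpha' a strong match. *)

From Stdlib Require Import Classical.

Set Implicit Arguments.

Section Elementary.
Variable C : Category.

Lemma pullback_lift {A B Z P Q : C} {f : Hom A Z} {g : Hom B Z}
    {p1 : Hom P A} {p2 : Hom P B} :
  is_pullback C f g p1 p2 -> forall (q1 : Hom Q A) (q2 : Hom Q B),
  comp f q1 = comp g q2 -> exists u : Hom Q P, comp p1 u = q1 /\ comp p2 u = q2.
Proof.
  intros [_ Huniv] q1 q2 Hq.
  destruct (Huniv Q q1 q2 Hq) as [u [Hu _]].
  exists u; exact Hu.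
Qed.

Lemma pullback_jointly_mono {A B Z P Q : C} {f : Hom A Z} {g : Hom B Z}
    {p1 : Hom P A} {p2 : Hom P B} :
  is_pullback C f g p1 p2 -> forall a b : Hom Q P,
  comp p1 a = comp p1 b -> comp p2 a = comp p2 b -> a = b.
Proof.
  intros [Hcomm Huniv] a b H1 H2.
  assert (Hq : comp f (comp p1 b) = comp g (comp p2 b)).
  { rewrite !comp_assoc, Hcomm; reflexivity. }
  destruct (Huniv Q (comp p1 b) (comp p2 b) Hq) as [u [_ Hunique]].
  rewrite (Hunique a H1 H2), (Hunique b eq_refl eq_refl); reflexivity.
Qed.

Lemma is_pullback_intro {A B Z P : C} (f : Hom A Z) (g : Hom B Z)
    (p1 : Hom P A) (p2 : Hom P B) :
  comp f p1 = comp g p2 ->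
  (forall (Q : C) (q1 : Hom Q A) (q2 : Hom Q B), comp f q1 = comp g q2 ->
     exists u : Hom Q P, comp p1 u = q1 /\ comp p2 u = q2) ->
  (forall (Q : C) (a b : Hom Q P), comp p1 a = comp p1 b -> comp p2 a = comp p2 b -> a = b) ->
  is_pullback C f g p1 p2.
Proof.
  intros Hcomm Hlift Hjoint. split; [exact Hcomm|].
  intros Q q1 q2 Hq. destruct (Hlift Q q1 q2 Hq) as [u [Hu1 Hu2]].
  exists u. split; [split; assumption|].
  intros v Hv1 Hv2. apply Hjoint; congruence.
Qed.

Section Pasting.
Variables (L'' L' K'' K' : C) (beta : Hom L'' L') (l' : Hom K' L')
  (l'' : Hom K'' L'') (k : Hom K'' K').
Hypothesis right_pullback : is_pullback C beta l' l'' k.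

Lemma pullback_paste {X P : C} {f : Hom X L''} {p1 : Hom P X} {p2 : Hom P K''} :
  is_pullback C f l'' p1 p2 -> is_pullback C (comp beta f) l' p1 (comp k p2).
Proof.
  intros left_pullback. apply is_pullback_intro.
  - rewrite <- comp_assoc, (proj1 left_pullback), !comp_assoc, (proj1 right_pullback).
    reflexivity.
  - intros Q q1 q2 Hq. rewrite <- comp_assoc in Hq.
    destruct (pullback_lift right_pullback _ _ Hq) as [v [Hv1 Hv2]].
    destruct (pullback_lift left_pullback q1 v (eq_sym Hv1)) as [u [Hu1 Hu2]].
    exists u. split; [exact Hu1|]. rewrite <- comp_assoc, Hu2; exact Hv2.
  - intros Q a b H1 H2. rewrite <- !comp_assoc in H2.
    apply (pullback_jointly_mono left_pullback); [exact H1|].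
    apply (pullback_jointly_mono right_pullback); [|exact H2].
    rewrite !comp_assoc, <- (proj1 left_pullback), <- !comp_assoc, H1; reflexivity.
Qed.

Lemma pullback_unpaste {X P : C} {f : Hom X L''} {p1 : Hom P X} {p2 : Hom P K''} :
  comp f p1 = comp l'' p2 ->
  is_pullback C (comp beta f) l' p1 (comp k p2) -> is_pullback C f l'' p1 p2.
Proof.
  intros Hcomm outer_pullback. apply is_pullback_intro; [exact Hcomm| |].
  - intros Q q1 q2 Hq.
    assert (Houter : comp (comp beta f) q1 = comp l' (comp k q2)).
    { rewrite <- comp_assoc, Hq, !comp_assoc, (proj1 right_pullback); reflexivity. }
    destruct (pullback_lift outer_pullback _ _ Houter) as [u [Hu1 Hu2]].
    exists u. split; [exact Hu1|].
    apply (pullback_jointly_mono right_pullback).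
    + rewrite comp_assoc, <- Hcomm, <- comp_assoc, Hu1; exact Hq.
    + rewrite comp_assoc; exact Hu2.
  - intros Q a b H1 H2. apply (pullback_jointly_mono outer_pullback); [exact H1|].
    rewrite <- !comp_assoc, H2; reflexivity.
Qed.

End Pasting.

Lemma mono_of_mono_comp {A B D : C} (f : Hom A B) (g : Hom B D) :
  mono C (comp g f) -> mono C f.
Proof.
  intros Hgf X a b E. apply Hgf. rewrite <- !comp_assoc, E; reflexivity.
Qed.

End Elementary.

(* Decided classically, so that a single factorization serves both the amendable and the
   strongly amendable claim. *)
Lemma amendable_factorization {C : Category} (HA : amendable C) {L L' : C} (tL : Hom L L') :
  exists (L'' : C) (tL' : Hom L L'') (beta : Hom L'' L'),
    mono C tL' /\ tL = comp beta tL' /\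
    forall (GL : C) (m : Hom L GL) (alpha : Hom GL L'),
      mono C m -> tL = comp alpha m ->
      exists alpha' : Hom GL L'', comp alpha' m = tL' /\ comp beta alpha' = alpha /\
        (strongly_amendable C -> is_pullback C tL' alpha' (idm L) m).
Proof.
  destruct (classic (strongly_amendable C)) as [HS|HS].
  - destruct (HS L L' tL) as [L'' [tL' [beta [Hmono [Hfac Hext]]]]].
    exists L'', tL', beta. split; [exact Hmono|]. split; [exact Hfac|].
    intros GL m alpha Hm Ht. destruct (Hext GL m alpha Hm Ht) as [alpha' [A1 [A2 A3]]].
    exists alpha'. auto.
  - destruct (HA L L' tL) as [L'' [tL' [beta [Hmono [Hfac Hext]]]]].
    exists L'', tL', beta. split; [exact Hmono|]. split; [exact Hfac|].
    intros GL m alpha Hm Ht. destruct (Hext GL m alpha Hm Ht) as [alpha' [A1 A2]].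
    exists alpha'. split; [exact A1|]. split; [exact A2|]. contradiction.
Qed.

Section AmendedRule.
Variables (C : Category) (rho : PBPO_rule C).
Variables (L'' : C) (tL' : Hom (rL rho) L'') (beta : Hom L'' (rL' rho)).
Hypothesis tL'_mono : mono C tL'.
Hypothesis tL_factor : r_tL rho = comp beta tL'.
Variables (K'' : C) (l'' : Hom K'' L'') (k : Hom K'' (rK' rho)).
Hypothesis K''_pullback : is_pullback C beta (r_l' rho) l'' k.
Variable tK'' : Hom (rK rho) K''.
Hypothesis tK''_l : comp l'' tK'' = comp tL' (r_l rho).
Hypothesis tK''_k : comp k tK'' = r_tK rho.
Variables (R'' : C) (r'' : Hom K'' R'') (tR'' : Hom (rR rho) R'').
Hypothesis R''_pushout : is_pushout C tK'' (r_r rho) r'' tR''.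

Definition amended_rule : PBPO_rule C := {|
  r_l := r_l rho; r_r := r_r rho;
  r_tL := tL'; r_tK := tK''; r_tR := tR''; r_l' := l''; r_r' := r'';
  r_comm_l := eq_sym tK''_l; r_comm_r := eq_sym (proj1 R''_pushout) |}.

Lemma amended_rule_monic : canonical_rule rho -> monic_rule amended_rule.
Proof.
  intros [Hpb Hpo]. split; [split|exact tL'_mono]; simpl.
  - apply (pullback_unpaste K''_pullback (eq_sym tK''_l)).
    rewrite <- tL_factor, tK''_k; exact Hpb.
  - exact R''_pushout.
Qed.

Lemma amended_step_of_step {GL GR : C} {m : Hom (rL rho) GL} {alpha' : Hom GL L''} :
  comp alpha' m = tL' -> pbpo_step rho GL GR m (comp beta alpha') ->
  pbpo_step amended_rule GL GR m alpha'.
Proof.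
  intros Hmatch [_ [GK [gL [u' [Hpb [u [Hu_l [Hu_tK Hpo]]]]]]]].
  split; [simpl; symmetry; exact Hmatch|].
  assert (Hsq : comp beta (comp alpha' gL) = comp (r_l' rho) u').
  { rewrite comp_assoc; exact (proj1 Hpb). }
  destruct (pullback_lift K''_pullback _ _ Hsq) as [u'' [Hu''_l Hu''_k]].
  exists GK, gL, u''. split.
  - apply (pullback_unpaste K''_pullback (eq_sym Hu''_l)).
    rewrite Hu''_k; exact Hpb.
  - exists u. split; [exact Hu_l|]. split; [|exact Hpo]. simpl.
    apply (pullback_jointly_mono K''_pullback).
    + rewrite comp_assoc, Hu''_l, <- comp_assoc, Hu_l, comp_assoc, Hmatch, tK''_l.
      reflexivity.
    + rewrite comp_assoc, Hu''_k, tK''_k; exact Hu_tK.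
Qed.

Lemma step_of_amended_step {GL GR : C} {m : Hom (rL rho) GL} {alpha' : Hom GL L''} :
  pbpo_step amended_rule GL GR m alpha' ->
  mono C m /\ pbpo_step rho GL GR m (comp beta alpha').
Proof.
  intros [Hmatch [GK [gL [u'' [Hpb [u [Hu_l [Hu_tK Hpo]]]]]]]]. simpl in *.
  split.
  - apply (mono_of_mono_comp m alpha'). rewrite <- Hmatch; exact tL'_mono.
  - split; [rewrite tL_factor, Hmatch, comp_assoc; reflexivity|].
    exists GK, gL, (comp k u''). split; [exact (pullback_paste K''_pullback Hpb)|].
    exists u. split; [exact Hu_l|]. split; [|exact Hpo].
    rewrite <- comp_assoc, Hu_tK; exact tK''_k.
Qed.

Lemma rewrites_mono_iff_amended :
  (forall (GL : C) (m : Hom (rL rho) GL) (alpha : Hom GL (rL' rho)),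
     mono C m -> r_tL rho = comp alpha m ->
     exists alpha' : Hom GL L'', comp alpha' m = tL' /\ comp beta alpha' = alpha) ->
  forall GL GR : C, rewrites_mono rho GL GR <-> rewrites amended_rule GL GR.
Proof.
  intros Hamend GL GR. split.
  - intros [m [alpha [Hm Hstep]]].
    destruct (Hamend GL m alpha Hm (proj1 Hstep)) as [alpha' [Hmatch Hbeta]].
    subst alpha. exists m, alpha'. exact (amended_step_of_step Hmatch Hstep).
  - intros [m [alpha' Hstep]].
    exists m, (comp beta alpha'). exact (step_of_amended_step Hstep).
Qed.

Lemma rewrites_mono_iff_amended_SM :
  (forall (GL : C) (m : Hom (rL rho) GL) (alpha : Hom GL (rL' rho)),
     mono C m -> r_tL rho = comp alpha m ->
     exists alpha' : Hom GL L'', comp alpha' m = tL' /\ comp beta alpha' = alpha /\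
       is_pullback C tL' alpha' (idm (rL rho)) m) ->
  forall GL GR : C, rewrites_mono rho GL GR <-> rewrites_SM amended_rule GL GR.
Proof.
  intros Hamend GL GR. split.
  - intros [m [alpha [Hm Hstep]]].
    destruct (Hamend GL m alpha Hm (proj1 Hstep)) as [alpha' [Hmatch [Hbeta Hstrong]]].
    subst alpha. exists m, alpha'.
    split; [exact Hstrong|exact (amended_step_of_step Hmatch Hstep)].
  - intros [m [alpha' [_ Hstep]]].
    exists m, (comp beta alpha'). exact (step_of_amended_step Hstep).
Qed.

End AmendedRule.

Theorem lemma5 (C : Category) (HPB : has_pullbacks C) (HPO : has_pushouts C)
    (HA : amendable C) (rho : PBPO_rule C) (Hrho : canonical_rule rho) :
  exists sigma : PBPO_rule C,
    monic_rule sigma /\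
    (forall GL GR : C, rewrites_mono rho GL GR <-> rewrites sigma GL GR) /\
    (strongly_amendable C ->
       forall GL GR : C, rewrites_mono rho GL GR <-> rewrites_SM sigma GL GR).
Proof.
  destruct (amendable_factorization HA (r_tL rho))
    as [L'' [tL' [beta [Hmono [Hfactor Hamend]]]]].
  destruct (HPB _ _ _ beta (r_l' rho)) as [K'' [l'' [k Hpb]]].
  assert (Hsq : comp beta (comp tL' (r_l rho)) = comp (r_l' rho) (r_tK rho)).
  { rewrite comp_assoc, <- Hfactor; exact (r_comm_l rho). }
  destruct (pullback_lift Hpb _ _ Hsq) as [tK'' [HtK_l HtK_k]].
  destruct (HPO _ _ _ tK'' (r_r rho)) as [R'' [r'' [tR'' Hpo]]].
  exists (amended_rule rho L'' tL' l'' HtK_l Hpo). split; [|split].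
  - exact (amended_rule_monic Hmono Hfactor Hpb HtK_l HtK_k Hpo Hrho).
  - apply (rewrites_mono_iff_amended rho Hmono Hfactor Hpb HtK_l HtK_k Hpo).
    intros GL m alpha Hm Ht.
    destruct (Hamend GL m alpha Hm Ht) as [alpha' [A1 [A2 _]]]. eauto.
  - intros Hstrong.
    apply (rewrites_mono_iff_amended_SM rho Hmono Hfactor Hpb HtK_l HtK_k Hpo).
    intros GL m alpha Hm Ht.
    destruct (Hamend GL m alpha Hm Ht) as [alpha' [A1 [A2 A3]]]. eauto.
Qed.
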